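(* In the setting below, the group $G_M$ is isomorphic to the semi-direct product $\mathbb Z\ltimes\mathbb Z^{2n+1}$ associated with the action of $\mathbb Z$ on $\mathbb Z^{2n+1}$ in which a generator $t$ of $\mathbb Z$ acts by $t\cdot v=M^\top v$.
   Context: Let $n\ge 1$ and let $M=(m_{ij})\in SL(2n+1,\mathbb Z)$. Assume that $M$ has exactly one real eigenvalue $\alpha$, that $\alpha>0$, $\alpha\neq 1$, that $\alpha$ is a simple eigenvalue, and that the remaining eigenvalues are $\beta_1,\dots,\beta_k,\bar\beta_1,\dots,\bar\beta_k$ with $\mathrm{Im}\,\beta_j>0$. Let $W\subset\mathbb C^{2n+1}$ be the direct sum of the generalized eigenspaces of $M$ for $\beta_1,\dots,\beta_k$ (so $\dim_{\mathbb C}W=n$). Fix a real eigenvector $a=(a^{(1)},\dots,a^{(2n+1)})^\top\in\mathbb R^{2n+1}$ of $M$ for $\alpha$ and a basis $b_1,\dots,b_n$ of $W$, $b_j=(b_j^{(1)},\dots,b_j^{(2n+1)})^\top$, and let $R=(r_{\ell j})\in M_n(\mathbb C)$ be given by $Mb_j=\sum_{\ell=1}^n r_{\ell j}b_\ell$. For $i=1,\dots,2n+1$ put $u_i=(a^{(i)},b_1^{(i)},\dots,b_n^{(i)})^\top\in\mathbb R\times\mathbb C^n$. Let $\mathbb H=\{w\in\mathbb C:\mathrm{Im}\,w>0\}$, and define holomorphic automorphisms of $\mathbb H\times\mathbb C^n$ by $g_0(w,z)=(\alpha w,R^\top z)$ and $g_i(w,z)=(w,z)+u_i$ for $1\le i\le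 2n+1$. Let $G_M$ be the group generated by $g_0,\dots,g_{2n+1}$. *)

From HB Require Import structures.
From mathcomp Require Import all_boot all_order all_algebra.
From mathcomp Require Import complex.
From mathcomp Require Import reals.
Set Implicit Arguments. Unset Strict Implicit. Unset Printing Implicit Defensive.
Import Order.TTheory GRing.Theory Num.Theory.
Local Open Scope ring_scope.
Local Open Scope complex_scope.

Section GM.
Variable R : realType.
Local Notation C := R[i].

Definition HC (n : nat) := {p : C * 'cV[C]_n | 0 < complex.Im p.1}.

Lemma HC_scale_proof n (alpha : R) (Rm : 'M[C]_n) (p : HC n) :
  0 < alpha -> 0 < complex.Im ((alpha%:C * (val p).1, Rm *m (val p).2).1).
Proof.
case: p => [[[x y] z] /= hy] ha.
rewrite /=; rewrite ?mul0r ?subr0 ?addr0 ?add0r ?mulr0; by apply: mulr_gt0.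
Qed.

(* g_0 (w, z) = (alpha w, Rm z)   (Rm will be R^T). *)
Definition g_scale n (alpha : R) (ha : 0 < alpha) (Rm : 'M[C]_n) (p : HC n)
  : HC n :=
  exist _ (alpha%:C * (val p).1, Rm *m (val p).2) (HC_scale_proof Rm p ha).

Lemma HC_transl_proof n (a : R) (c : 'cV[C]_n) (p : HC n) :
  0 < complex.Im (((val p).1 + a%:C, (val p).2 + c).1).
Proof. by case: p => [[[x y] z] /= hy]; rewrite addr0. Qed.

Definition g_transl n (a : R) (c : 'cV[C]_n) (p : HC n) : HC n :=
  exist _ ((val p).1 + a%:C, (val p).2 + c) (HC_transl_proof a c p).

End GM.

(* The subgroup of the group of bijections of T generated by a set S of
   bijections: all finite compositions of elements of S and of their
   inverses (group law = composition, identity = id). *)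
Inductive gen_group (T : Type) (S : (T -> T) -> Prop) : (T -> T) -> Prop :=
| gen_id : gen_group S id
| gen_mul (g f : T -> T) : S g -> gen_group S f -> gen_group S (g \o f)
| gen_inv (g h f : T -> T) : S g -> cancel g h -> cancel h g ->
    gen_group S f -> gen_group S (h \o f).

Definition gen_eigvec (F : fieldType) (m : nat) (A : 'M[F]_m) (beta : F)
  (v : 'cV[F]_m) : bool :=
  ((A - beta%:M) ^+ m) *m v == 0.

(* W = sum of the generalized eigenspaces of A for the eigenvalues beta
   with Im beta > 0 (non-eigenvalues contribute the zero space). *)
Definition in_W (R : realType) (m : nat) (A : 'M[R[i]]_m) (v : 'cV[R[i]]_m)
  : Prop :=
  exists s : seq (R[i] * 'cV[R[i]]_m),
    all (fun p => (0 < complex.Im p.1) && gen_eigvec A p.1 p.2) s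
    /\ v = \sum_(p <- s) p.2.

(* Semidirect product  Z |x Z^(m+1)  with t . v = M^T v :
   (k, v) * (l, w) = (k + l, v + (M^T)^k w). *)
Definition sdp_mul (m : nat) (M : 'M[int]_m.+1)
  (x y : int * 'cV[int]_m.+1) : int * 'cV[int]_m.+1 :=
  (x.1 + y.1, x.2 + (M^T ^ x.1) *m y.2).

From HB Require Import structures.
From mathcomp Require Import all_boot all_order all_algebra.
From mathcomp Require Import complex.
From mathcomp Require Import reals.
From Stdlib Require Import FunctionalExtensionality.
From mathcomp Require Import ring.
Set Implicit Arguments. Unset Strict Implicit. Unset Printing Implicit Defensive.
Import Order.TTheory GRing.Theory Num.Theory.
Local Open Scope ring_scope.
Local Open Scope complex_scope.

(* The isomorphism sends (k, v) to the affine map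
   (w, z) |-> (alpha^k w + a.v, (R^T)^k z + B^T v).  Because a and B are
   eigendata of M, a.(M^T v) = alpha (a.v) and B^T M^T v = R^T B^T v, so this is
   a homomorphism from Z |x Z^(2n+1); it maps the generators (1, 0) and (0, e_i)
   of the semidirect product to g_0 and g_i, hence its image is G_M.
   For injectivity, evaluating at (i, 0) recovers alpha^k, hence k as alpha <> 1,
   together with a.v and B^T v.  An integral v with a.v = 0 and B^T v = 0 is also
   killed by the conjugate of B.  The rows of a^T, B^T and conj(B)^T lie in the
   kernels of polynomials in M^T whose roots are real, in the upper and in the
   lower half plane respectively; these polynomials are pairwise coprime, so the
   three row spaces are independent and their dimensions 1 + n + n fill
   C^(2n+1), forcing v = 0.  This dimension count makes superfluous the
   hypotheses that alpha is a simple root and the only real one, and that the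
   columns of B span W: only their independence and membership in W is used. *)

Lemma trmxX (F : comNzRingType) m (X : 'M[F]_m.+1) k : (X ^+ k)^T = X^T ^+ k.
Proof.
elim: k => [|k IH]; first by rewrite !expr0 trmx1.
by rewrite exprS exprSr -!mulmxE trmx_mul IH.
Qed.

Lemma gen_eigvecE (F : fieldType) m (X : 'M[F]_m.+1) b (v : 'cV[F]_m.+1) :
  gen_eigvec X b v = (v^T <= geigenspace X^T b)%MS.
Proof.
rewrite geigenspaceE (_ : (X^T - b%:M) ^+ m.+1 = ((X - b%:M) ^+ m.+1)^T).
  by rewrite sub_kermx -trmx_mul trmx_eq0.
by rewrite trmxX linearB /= tr_scalar_mx.
Qed.

Lemma kermxpoly_dvd (F : fieldType) m (g : 'M[F]_m.+1) p q :
  p %| q -> (kermxpoly g p <= kermxpoly g q)%MS.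
Proof.
case/dvdpP=> r ->; apply/sub_kermxP.
by rewrite /kermxpoly mulrC rmorphM /= -mulmxE mulmxA mulmx_ker mul0mx.
Qed.

Lemma coprimep_disjoint_roots (F : closedFieldType) (p q : {poly F}) :
  (forall x, root p x -> ~~ root q x) -> coprimep p q.
Proof.
move=> pq; apply: contraT => /closed_rootP[x].
by rewrite root_gcd => /andP[/pq/negPf->].
Qed.

Lemma row_free_tr_inj (F : fieldType) m n (B : 'M[F]_(m, n)) :
  (forall c : 'cV_n, B *m c = 0 -> c = 0) -> row_free B^T.
Proof.
move=> Binj; rewrite -kermx_eq0; apply/rowV0P => x /sub_kermxP xB0.
by rewrite -[x]trmxK (Binj x^T) ?trmx0 // -[B *m _]trmxK trmx_mul trmxK xB0 trmx0.
Qed.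

Lemma unitmx_intertwine (F : fieldType) m n (X : 'M[F]_m) (B : 'M[F]_(m, n.+1))
    (Y : 'M[F]_n.+1) :
  X \in unitmx -> (forall c : 'cV_n.+1, B *m c = 0 -> c = 0) -> X *m B = B *m Y ->
  Y \in unitmx.
Proof.
move=> Xu Binj XB; rewrite -unitmx_tr -row_free_unit; apply: row_free_tr_inj => c Yc0.
by apply: Binj; rewrite -(mulKmx Xu (B *m c)) [X *m _]mulmxA XB -mulmxA Yc0 !mulmx0.
Qed.

Section ComplexSpectrum.
Variable R : rcfType.
Local Notation C := R[i].
Local Notation cj := (map_mx conjc).

Lemma Im_conjc (z : C) : complex.Im (conjc z) = - complex.Im z.
Proof. by case: z. Qed.

Definition upper_half_roots (p : {poly C}) := forall z, root p z -> 0 < complex.Im z.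

Lemma upper_half_roots_prod (I : Type) (r : seq I) (P : pred I) (F : I -> {poly C}) :
  (forall i, P i -> upper_half_roots (F i)) ->
  upper_half_roots (\prod_(i <- r | P i) F i).
Proof.
move=> F_upper; apply: (big_ind upper_half_roots) => // [z|p q p_upper q_upper z].
  by rewrite (negPf (root1 z)).
by rewrite rootM => /orP[/p_upper|/q_upper].
Qed.

Section Spanning.
Variables (n : nat) (A : 'M[C]_n.*2.+1) (alpha : R) (a : 'rV[C]_n.*2.+1).
Variables (U : 'M[C]_(n, n.*2.+1)) (p : {poly C}).
Hypotheses (A_real : cj A = A) (a_neq0 : a != 0) (a_eig : a *m A = alpha%:C *: a).
Hypotheses (U_free : row_free U) (p_upper : upper_half_roots p).
Hypothesis U_ker : (U <= kermxpoly A p)%MS.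

Lemma eig_upper_lower_row_full : row_full (a + U + cj U)%MS.
Proof.
have a_ker : (a <= kermxpoly A ('X - (alpha%:C)%:P))%MS.
  by rewrite -eigenspace_poly; apply/eigenspaceP.
have cjU_ker : (cj U <= kermxpoly A (map_poly conjc p))%MS.
  by rewrite -[A in kermxpoly A]A_real -map_kermxpoly map_submx.
have p_lower z : root (map_poly conjc p) z -> complex.Im z < 0.
  by rewrite -{1}[z]conjcK fmorph_root => /p_upper; rewrite Im_conjc oppr_gt0.
have alpha_p : coprimep ('X - (alpha%:C)%:P) p.
  by apply: coprimep_disjoint_roots => z; rewrite root_XsubC => /eqP->;
    apply/negP => /p_upper; rewrite ltxx.
have alpha_p_cjp : coprimep (('X - (alpha%:C)%:P) * p) (map_poly conjc p).
  apply: coprimep_disjoint_roots => z; rewrite rootM root_XsubC.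
  case/orP => [/eqP->|/p_upper z_upper]; apply/negP => /p_lower; first by rewrite ltxx.
  by move/(lt_trans z_upper); rewrite ltxx.
have rank_aU : \rank (a + U)%MS = (1 + n)%N.
  rewrite mxrank_disjoint_sum ?rank_rV ?a_neq0 ?(eqP U_free) //.
  by apply/eqP; rewrite -submx0 -(mxdirect_kermxpoly A alpha_p) capmxS.
have aU_ker : (a + U <= kermxpoly A (('X - (alpha%:C)%:P) * p))%MS.
  by rewrite (kermxpolyM A alpha_p) addsmxS.
have rank_aUcjU : \rank (a + U + cj U)%MS = (1 + n + n)%N.
  rewrite mxrank_disjoint_sum ?rank_aU ?mxrank_map ?(eqP U_free) //.
  by apply/eqP; rewrite -submx0 -(mxdirect_kermxpoly A alpha_p_cjp) capmxS.
by rewrite /row_full rank_aUcjU add1n addSn addnn.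
Qed.

Lemma real_orthogonal_eq0 (d : 'cV[C]_n.*2.+1) :
  cj d = d -> a *m d = 0 -> U *m d = 0 -> d = 0.
Proof.
move=> d_real ad0 Ud0.
have cjUd0 : cj U *m d = 0 by rewrite -d_real -map_mxM Ud0 map_mx0.
have : (1%:M <= kermx d)%MS.
  apply: submx_trans (_ : 1%:M <= a + U + cj U)%MS _.
    by rewrite sub1mx eig_upper_lower_row_full.
  by rewrite !addsmx_sub !sub_kermx ad0 Ud0 cjUd0 !eqxx.
by move/sub_kermxP; rewrite mul1mx.
Qed.

End Spanning.
End ComplexSpectrum.

Section GeneralizedEigenspaces.
Variable R : realType.
Local Notation C := R[i].

Lemma in_W_kermxpoly m (A : 'M[C]_m.+1) v :
  in_W A v -> exists2 p, upper_half_roots p & (v^T <= kermxpoly A^T p)%MS.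
Proof.
case=> s [/allP s_ok ->]; exists (\prod_(q <- s) ('X - q.1%:P) ^+ m.+1).
  rewrite big_seq; apply: upper_half_roots_prod => q /s_ok /andP[q_upper _] z.
  by rewrite root_exp_XsubC => /eqP->.
rewrite raddf_sum /= big_seq; apply: summx_sub => q q_s.
have /andP[_ q_geig] := s_ok q q_s; rewrite gen_eigvecE in q_geig.
apply: submx_trans q_geig (kermxpoly_dvd _ _).
by rewrite (big_rem q q_s) /= dvdp_mulIl.
Qed.

Lemma cols_in_W_kermxpoly m n (A : 'M[C]_m.+1) (B : 'M[C]_(m.+1, n)) :
  (forall j, in_W A (col j B)) ->
  exists2 p, upper_half_roots p & (B^T <= kermxpoly A^T p)%MS.
Proof.
move=> BW; have [f f_upper f_ker] := fin_all_exists2 (fun j => in_W_kermxpoly (BW j)).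
exists (\prod_j f j); first exact: upper_half_roots_prod.
apply/row_subP => j; rewrite -tr_col; apply: submx_trans (f_ker j) _.
by apply: kermxpoly_dvd; rewrite (bigD1 j) //= dvdp_mulIl.
Qed.

End GeneralizedEigenspaces.

Notation intmx := (map_mx (fun x : int => x%:~R)).

Lemma map_intmx (R S : nzRingType) (f : {rmorphism R -> S}) k l (X : 'M[int]_(k, l)) :
  map_mx f (intmx X) = intmx X.
Proof. by apply/matrixP => i j; rewrite !mxE rmorph_int. Qed.

Definition transl_w (R : pzRingType) m (a : 'cV[R]_m) (v : 'cV[int]_m) : R :=
  (a^T *m intmx v) 0 0.

Definition transl_z (R : comPzRingType) m p (B : 'M[R]_(m, p)) (v : 'cV[int]_m) :
  'cV[R]_p := B^T *m intmx v.

Lemma transl_wD (R : pzRingType) m (a : 'cV[R]_m) u v :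
  transl_w a (u + v) = transl_w a u + transl_w a v.
Proof. by rewrite /transl_w map_mxD mulmxDr mxE. Qed.

Lemma transl_wB (R : pzRingType) m (a : 'cV[R]_m) u v :
  transl_w a (u - v) = transl_w a u - transl_w a v.
Proof. by rewrite /transl_w map_mxB mulmxBr !mxE. Qed.

Lemma transl_zD (R : comPzRingType) m p (B : 'M[R]_(m, p)) u v :
  transl_z B (u + v) = transl_z B u + transl_z B v.
Proof. by rewrite /transl_z map_mxD mulmxDr. Qed.

Lemma transl_zB (R : comPzRingType) m p (B : 'M[R]_(m, p)) u v :
  transl_z B (u - v) = transl_z B u - transl_z B v.
Proof. by rewrite /transl_z map_mxB mulmxBr. Qed.

Lemma transl_ker_eq0 (R : realType) n (M : 'M[int]_n.*2.+1) (alpha : R)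
    (a : 'cV[R]_n.*2.+1) (B : 'M[R[i]]_(n.*2.+1, n)) :
  a != 0 -> intmx M *m a = alpha *: a ->
  (forall j, in_W (intmx M) (col j B)) -> (forall c : 'cV_n, B *m c = 0 -> c = 0) ->
  forall d, transl_w a d = 0 -> transl_z B d = 0 -> d = 0.
Proof.
move=> a_neq0 Ma BW Binj d ad0 Bd0.
pose aC := map_mx (real_complex R) a.
have [p p_upper B_ker] := cols_in_W_kermxpoly BW.
have a_d : a^T *m intmx d = 0.
  by apply/matrixP => i j; rewrite !ord1 -[LHS]/(transl_w a d) ad0 mxE.
suff dC0 : intmx d = 0 :> 'cV[R[i]]_n.*2.+1.
  apply/matrixP => i j; move/matrixP/(_ i j): dC0.
  by rewrite !mxE => /eqP; rewrite intr_eq0 => /eqP.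
apply: (@real_orthogonal_eq0 R n (intmx M)^T alpha aC^T B^T p) => //.
- by rewrite -map_trmx map_intmx.
- by rewrite trmx_eq0 map_mx_eq0.
- by rewrite -trmx_mul -(map_intmx (real_complex R) M) -map_mxM Ma map_mxZ linearZ.
- exact: row_free_tr_inj.
- exact: map_intmx.
- by rewrite /aC -(map_intmx (real_complex R) d) map_trmx -map_mxM a_d map_mx0.
Qed.

Lemma gen_group_comp (T : Type) (S : (T -> T) -> Prop) f h :
  gen_group S f -> gen_group S h -> gen_group S (f \o h).
Proof.
move=> Sf Sh; elim: Sf => [|g f' Sg _ IH|g g' f' Sg gK g'K _ IH] //.
  exact: gen_mul Sg IH.
exact: gen_inv Sg gK g'K IH.
Qed.

Section IntertwineExprz.
Variables (G H : unitRingType) (V W : Type).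
Variables (actV : G -> V -> V) (actW : H -> W -> W).
Hypotheses (actVM : forall g g' v, actV (g * g') v = actV g (actV g' v))
  (actV1 : forall v, actV 1 v = v).
Hypotheses (actWM : forall h h' w, actW (h * h') w = actW h (actW h' w))
  (actW1 : forall w, actW 1 w = w).

Lemma intertwine_exprz (f : V -> W) x y :
  x \is a GRing.unit -> y \is a GRing.unit ->
  (forall v, f (actV x v) = actW y (f v)) ->
  forall k v, f (actV (x ^ k) v) = actW (y ^ k) (f v).
Proof.
move=> ux uy fxy.
have fXn m v : f (actV (x ^+ m) v) = actW (y ^+ m) (f v).
  elim: m v => [|m IH] v; first by rewrite !expr0 actV1 actW1.
  by rewrite !exprS actVM actWM fxy IH.
case=> m v; first exact: fXn.
change (f (actV (x ^+ m.+1)^-1 v) = actW (y ^+ m.+1)^-1 (f v)).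
have xK : actV (x ^+ m.+1) (actV (x ^+ m.+1)^-1 v) = v.
  by rewrite -actVM mulrV ?unitrX // actV1.
by rewrite -{2}xK fXn -actWM mulVr ?unitrX // actW1.
Qed.

End IntertwineExprz.

Section SemidirectProduct.
Variables (m : nat) (M : 'M[int]_m.+1).
Hypothesis MT_unit : M^T \is a GRing.unit.
Local Notation sdp := (sdp_mul M).

Definition sdp_inv (x : int * 'cV[int]_m.+1) : int * 'cV[int]_m.+1 :=
  (- x.1, - (M^T ^ (- x.1) *m x.2)).

Lemma sdp_mulV x : sdp x (sdp_inv x) = (0, 0).
Proof.
case: x => k v; rewrite /sdp_mul /= subrr mulmxN mulmxA -invr_expz.
by rewrite mulmxE mulrV ?unitrXz // mul1mx subrr.
Qed.

Lemma sdp_mulVx x : sdp (sdp_inv x) x = (0, 0).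
Proof. by case: x => k v; rewrite /sdp_mul /= addNr addNr. Qed.

Lemma sdp_generated (P : int * 'cV[int]_m.+1 -> Prop) :
  P (1, 0) -> P (sdp_inv (1, 0)) ->
  (forall k, P (0, delta_mx k 0)) -> (forall k, P (sdp_inv (0, delta_mx k 0))) ->
  (forall x y, P x -> P y -> P (sdp x y)) ->
  forall x, P x.
Proof.
move=> Pt Pt' Pe Pe' PM.
have Pk (k : int) : P (k, 0).
  elim/int_ind: k => [|k IH|k IH].
  - by rewrite -(sdp_mulV (1, 0)); apply: PM.
  - have -> : (k.+1%:Z, 0 : 'cV_m.+1) = sdp (1, 0) (k%:Z, 0).
      by rewrite /sdp_mul /= mulmx0 addr0 intS.
    exact: PM.
  - have -> : (- k.+1%:Z, 0 : 'cV_m.+1) = sdp (sdp_inv (1, 0)) (- k%:Z, 0).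
      by rewrite /sdp_mul /= !mulmx0 oppr0 addr0 intS opprD.
    exact: PM.
have P0v u w : P (0, u) -> P (0, w) -> P (0, u + w).
  have -> : (0%:Z, u + w) = sdp (0, u) (0, w) by rewrite /sdp_mul /= addr0 mul1mx.
  exact: PM.
have Pe_int (c : int) k : P (0, c *: delta_mx k 0).
  elim/int_ind: c => [|c IH|c IH]; first by rewrite scale0r; apply: Pk.
    by rewrite intS scalerDl scale1r; apply: P0v.
  rewrite intS opprD scalerDl scaleN1r; apply: P0v => //.
  by have := Pe' k; rewrite /sdp_inv /= oppr0 mul1mx.
have Pv v : P (0, v).
  rewrite [v]matrix_sum_delta; apply: (big_ind (fun w => P (0, w))) => [|u w|i _].
  - exact: Pk.
  - exact: P0v.
  - by rewrite big_ord1; apply: Pe_int.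
case=> k v; have -> : (k, v) = sdp (0, v) (k, 0) by rewrite /sdp_mul /= add0r mulmx0 addr0.
exact: PM.
Qed.

Variables (T : Type) (phi : int * 'cV[int]_m.+1 -> T -> T).
Hypotheses (phi_mul : forall x y, phi (sdp x y) = phi x \o phi y) (phi0 : phi (0, 0) = id).

Lemma phi_inv_cancel x : cancel (phi x) (phi (sdp_inv x)).
Proof. by move=> q; rewrite -[LHS]/((phi _ \o phi x) q) -phi_mul sdp_mulVx phi0. Qed.

Lemma phi_cancel_inv x : cancel (phi (sdp_inv x)) (phi x).
Proof. by move=> q; rewrite -[LHS]/((phi x \o phi _) q) -phi_mul sdp_mulV phi0. Qed.

Lemma phi_gen_group (S : (T -> T) -> Prop) :
  S (phi (1, 0)) -> (forall k, S (phi (0, delta_mx k 0))) ->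
  forall x, gen_group S (phi x).
Proof.
move=> St Se; apply: (sdp_generated (P := fun x => gen_group S (phi x))).
- exact: gen_mul St (gen_id _).
- exact: gen_inv St (phi_inv_cancel _) (phi_cancel_inv _) (gen_id _).
- by move=> k; exact: gen_mul (Se k) (gen_id _).
- by move=> k; exact: gen_inv (Se k) (phi_inv_cancel _) (phi_cancel_inv _) (gen_id _).
- by move=> x y Sx Sy; rewrite phi_mul; apply: gen_group_comp.
Qed.

Lemma phi_onto (S : (T -> T) -> Prop) :
  (forall f, S f -> exists x, f = phi x) ->
  forall f, gen_group S f -> exists x, phi x = f.
Proof.
move=> Sphi f; elim=> [|g f' /Sphi[y ->] _ [x <-]|g h f' /Sphi[y ->] hK _ _ [x <-]].
- by exists (0, 0).
- by exists (sdp y x); rewrite phi_mul.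
exists (sdp (sdp_inv y) x); rewrite phi_mul; congr (_ \o _).
by apply: functional_extensionality => q; rewrite -[in RHS](phi_cancel_inv y q) hK.
Qed.

End SemidirectProduct.

Section AffineAction.
Variables (R : realType) (m p : nat).
Local Notation C := R[i].
Variables (M : 'M[int]_m.+1) (alpha : R) (a : 'cV[R]_m.+1).
Variables (B : 'M[C]_(m.+1, p.+1)) (Rm : 'M[C]_p.+1).
Hypotheses (alpha_gt0 : 0 < alpha) (MT_unit : M^T \is a GRing.unit).
Hypothesis Rm_unit : Rm \in unitmx.
Hypotheses (Ma : intmx M *m a = alpha *: a) (MB : intmx M *m B = B *m Rm).

Definition sdp_action (x : int * 'cV[int]_m.+1) : HC R p.+1 -> HC R p.+1 :=
  g_transl (transl_w a x.2) (transl_z B x.2)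
    \o g_scale (exprz_gt0 x.1 alpha_gt0) (Rm^T ^ x.1).

Let alpha_unit : alpha \is a GRing.unit := unitf_gt0 alpha_gt0.

Let RmT_unit : Rm^T \is a GRing.unit.
Proof. by rewrite -[_ \is a _]/(Rm^T \in unitmx) unitmx_tr. Qed.

Lemma transl_w_exprz k v : transl_w a (M^T ^ k *m v) = alpha ^ k * transl_w a v.
Proof.
apply: (intertwine_exprz (actV := fun g u => g *m u) (actW := *%R)) => //.
- by move=> g g' u; rewrite mulmxA.
- exact: mul1mx.
- by move=> h h' w; rewrite mulrA.
- exact: mul1r.
- move=> u; rewrite /transl_w map_mxM -map_trmx mulmxA -trmx_mul Ma.
  by rewrite linearZ /= -scalemxAl mxE.
Qed.

Lemma transl_z_exprz k v : transl_z B (M^T ^ k *m v) = Rm^T ^ k *m transl_z B v.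
Proof.
apply: (intertwine_exprz (actV := fun g u => g *m u) (actW := fun g u => g *m u)) => //.
- by move=> g g' u; rewrite mulmxA.
- exact: mul1mx.
- by move=> g g' u; rewrite mulmxA.
- exact: mul1mx.
- by move=> u; rewrite /transl_z map_mxM -map_trmx mulmxA -trmx_mul MB trmx_mul mulmxA.
Qed.

Lemma sdp_actionM x y : sdp_action (sdp_mul M x y) = sdp_action x \o sdp_action y.
Proof.
case: x y => [k v] [l w]; apply: functional_extensionality => q; apply: val_inj => /=.
congr pair.
  rewrite transl_wD transl_w_exprz exprzDr // !rmorphD !rmorphM /=; ring.
rewrite transl_zD transl_z_exprz exprzDr // -mulmxE mulmxDr !mulmxA.
by rewrite addrA addrAC.
Qed.

Lemma sdp_action0 : sdp_action (0, 0) = id.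
Proof.
apply: functional_extensionality => q; apply: val_inj => /=.
rewrite /transl_w /transl_z !map_mx0 !mulmx0 mxE !expr0z rmorph1 mul1r mul1mx !addr0.
by case: (val q).
Qed.

Lemma sdp_action_t : sdp_action (1, 0) = g_scale alpha_gt0 Rm^T.
Proof.
apply: functional_extensionality => q; apply: val_inj => /=.
by rewrite /transl_w /transl_z !map_mx0 !mulmx0 mxE !expr1z rmorph0 !addr0.
Qed.

Lemma sdp_action_e k : sdp_action (0, delta_mx k 0) = g_transl (a k 0) (row k B)^T.
Proof.
apply: functional_extensionality => q; apply: val_inj => /=.
rewrite !expr0z rmorph1 mul1r mul1mx /transl_w /transl_z !map_delta_mx -!colE.
by rewrite !mxE tr_row.
Qed.

Lemma sdp_action_inj :
  alpha != 1 -> (forall d, transl_w a d = 0 -> transl_z B d = 0 -> d = 0) ->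
  injective sdp_action.
Proof.
move=> alpha_neq1 transl_ker [k v] [l w].
pose i_pt : HC R p.+1 := exist _ (Complex 0 1, 0) ltr01.
move/(congr1 (fun f => val (f i_pt))) => /= -[e_re e_im e_z].
have <- : k = l.
  by apply: (ieexprIz alpha_gt0 alpha_neq1); move: e_im; rewrite !mulr1 !mul0r !addr0.
have ew : transl_w a v = transl_w a w by move: e_re; rewrite !mulr0 !mul0r !subr0 !add0r.
have ez : transl_z B v = transl_z B w by move: e_z; rewrite !mulmx0 !add0r.
congr pair; apply/eqP; rewrite -subr_eq0; apply/eqP/transl_ker.
  by rewrite transl_wB ew subrr.
by rewrite transl_zB ez subrr.
Qed.

End AffineAction.

Theorem proposition2p4 (R : realType) (n : nat)
  (M : 'M[int]_(n.*2.+1))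
  (alpha : R) (a : 'cV[R]_(n.*2.+1))
  (B : 'M[R[i]]_(n.*2.+1, n)) (Rm : 'M[R[i]]_n)
  (halpha : 0 < alpha) :
  (0 < n)%N ->
  \det M = 1 ->
  (* eigenvalue hypotheses, on the characteristic polynomial of M over C *)
  let chiM := char_poly (map_mx (fun x : int => (x%:~R : R[i])) M) in
  root chiM (alpha%:C) ->
  (forall z : R[i], root chiM z -> complex.Im z = 0 -> z = alpha%:C) ->
  alpha != 1 ->
  mup (alpha%:C) chiM = 1%N ->
  (* a is a real eigenvector of M for alpha *)
  a != 0 ->
  map_mx (fun x : int => (x%:~R : R)) M *m a = alpha *: a ->
  (* the columns b_1..b_n of B form a basis of W *)
  (forall j : 'I_n,
      in_W (map_mx (fun x : int => (x%:~R : R[i])) M) (col j B)) ->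
  (forall c : 'cV[R[i]]_n, B *m c = 0 -> c = 0) ->
  (forall v : 'cV[R[i]]_(n.*2.+1),
      in_W (map_mx (fun x : int => (x%:~R : R[i])) M) v ->
      exists c : 'cV[R[i]]_n, v = B *m c) ->
  (* M b_j = sum_l r_{lj} b_l *)
  map_mx (fun x : int => (x%:~R : R[i])) M *m B = B *m Rm ->
  (* G_M and the isomorphism with Z |x Z^(2n+1) *)
  let g0 := g_scale halpha Rm^T in
  let g (k : 'I_(n.*2.+1)) := g_transl (a k 0) (row k B)^T in
  let G_M := gen_group (fun f => f = g0 \/ exists k, f = g k) in
  exists phi : int * 'cV[int]_(n.*2.+1) -> (HC R n -> HC R n),
    [/\ forall x, G_M (phi x),
        forall f, G_M f -> exists x, phi x = f,
        injective phi
      & forall x y, phi (sdp_mul M x y) = phi x \o phi y].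
Proof.
case: n M a B Rm => [|n] M a B Rm // _ detM chiM _ _ alpha_neq1 _ a_neq0 Ma BW Binj _ MB
  g0 g G_M.
have MT_unit : M^T \in unitmx by rewrite unitmx_tr unitmxE detM unitr1.
have MC_unit : (intmx M : 'M[R[i]]_(n.+1.*2.+1)) \in unitmx.
  by rewrite unitmxE det_map_mx detM rmorph1 unitr1.
have Rm_unit := unitmx_intertwine MC_unit Binj MB.
have act_mul := sdp_actionM halpha MT_unit Rm_unit Ma MB.
have act0 := sdp_action0 a B Rm halpha.
exists (sdp_action a B Rm halpha); split => //.
- apply: (phi_gen_group MT_unit act_mul act0) => [|k]; first by left; rewrite sdp_action_t.
  by right; exists k; rewrite sdp_action_e.
- apply: (phi_onto MT_unit act_mul act0) => f [->|[k ->]].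
  + by exists (1, 0); rewrite sdp_action_t.
  + by exists (0, delta_mx k 0); rewrite sdp_action_e.
- exact: sdp_action_inj alpha_neq1 (transl_ker_eq0 a_neq0 Ma BW Binj).
Qed.
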